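(* For every integer $k\ge 0$, the set ${\bf Forb}(\Gamma_{\le k})$ is non-empty.
   Context: For a finite graph $G$ and indeterminates $X_G=\{x_u : u\in V(G)\}$, the generalized Laplacian matrix $L(G,X_G)$ is the $V(G)\times V(G)$ matrix over $\mathbb{Z}[X_G]$ with $(u,u)$-entry $x_u$ and $(u,v)$-entry $-m_{uv}$ for $u\ne v$, $m_{uv}$ being the number of edges between $u$ and $v$. The $i$-th critical ideal $I_i(G,X_G)$ is the ideal of $\mathbb{Z}[X_G]$ generated by all $i\times i$ minors of $L(G,X_G)$ (with $I_i=\langle1\rangle$ for $i<1$, $I_i=\langle 0\rangle$ for $i>|V(G)|$). The algebraic co-rank $\gamma(G)$ is the number of critical ideals of $G$ equal to $\langle 1\rangle$. $\Gamma_{\le k}$ is the set of simple connected graphs with $\gamma\le k$; ${\bf Forb}(\Gamma_{\le k})$ is the set of minimal (under induced subgraphs) simple connected graphs $G$ with $\gamma(G)\ge k+1$, equivalently the simple connected graphs $G$ with $\gamma(G)=k+1$ and $\gamma(G\setminus v)<\gamma(G)$ for all vertices $v$. *)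

From HB Require Import structures.
From mathcomp Require Import all_boot all_order all_algebra.
From mathcomp Require Import mpoly.
From Stdlib Require Import ClassicalEpsilon.

Set Implicit Arguments.
Unset Strict Implicit.
Unset Printing Implicit Defensive.

Import GRing.Theory.
Local Open Scope ring_scope.

Definition simple_graph (n : nat) (e : rel 'I_n) : Prop :=
  (forall u v, e u v = e v u) /\ (forall u, ~~ e u u).

Definition connected_graph (n : nat) (e : rel 'I_n) : Prop :=
  forall u v, connect e u v.

Definition gen_laplacian (n : nat) (e : rel 'I_n) : 'M[{mpoly int[n]}]_n :=
  \matrix_(u, v) (if u == v then 'X_u else if e u v then -1 else 0).

Definition incr_sel (i n : nat) (f : {ffun 'I_i -> 'I_n}) : Prop :=
  forall a b : 'I_i, (a < b)%N -> (f a < f b)%N.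

Definition minor (n i : nat) (M : 'M[{mpoly int[n]}]_n)
  (f g : {ffun 'I_i -> 'I_n}) : {mpoly int[n]} :=
  \det (\matrix_(a, b) M (f a) (g b)).

(* The i-th critical ideal (ideal generated by all i x i minors) equals <1>:
   1 is a Z[X_G]-linear combination of i x i minors. *)
Definition critical_ideal_trivial (n : nat) (e : rel 'I_n) (i : nat) : Prop :=
  exists s : seq ({mpoly int[n]} * {ffun 'I_i -> 'I_n} * {ffun 'I_i -> 'I_n}),
    (forall t, t \in s -> incr_sel t.1.2 /\ incr_sel t.2) /\
    \sum_(t <- s) t.1.1 * minor (gen_laplacian e) t.1.2 t.2 = 1.

Definition critical_ideal_trivialb (n : nat) (e : rel 'I_n) (i : nat) : bool :=
  if excluded_middle_informative (critical_ideal_trivial e i) then true else false.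

Definition gamma (n : nat) (e : rel 'I_n) : nat :=
  (\sum_(1 <= i < n.+1) critical_ideal_trivialb e i)%N.

Definition delete_vertex (n : nat) (e : rel 'I_n.+1) (v : 'I_n.+1) : rel 'I_n :=
  fun a b => e (lift v a) (lift v b).

(* G is in Forb(Gamma_{<= k}) (graphs have at least one vertex) *)
Definition in_Forb (k n : nat) (e : rel 'I_n.+1) : Prop :=
  simple_graph e /\ connected_graph e /\ gamma e = k.+1 /\
  forall v, (gamma (delete_vertex e v) < gamma e)%N.

(* The path P_(k+2) lies in Forb(Gamma_(<= k)).  For a graph on m vertices the
   top critical ideal is never trivial: evaluating L(G, X_G) at the degree
   vector gives the ordinary Laplacian, whose rows sum to zero, so every
   m x m minor vanishes there; hence gamma <= m - 1.  For the path on n + 1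
   vertices every i x i minor with i <= n is trivial, since rows 0..i-1 against
   columns 1..i form a triangular matrix with -1 on the diagonal.  So
   gamma(P_(k+2)) = k + 1, while deleting any vertex leaves k + 1 vertices and
   gamma <= k. *)
From mathcomp Require Import all_boot all_order all_algebra.
From mathcomp Require Import mpoly zify.
From Stdlib Require Import ClassicalEpsilon.

Set Implicit Arguments.
Unset Printing Implicit Defensive.

Import GRing.Theory.
Local Open Scope ring_scope.

Lemma det_eq0_of_row_sums_eq0 (R : comNzRingType) n (A : 'M[R]_n.+1) :
  (forall i, \sum_j A i j = 0) -> \det A = 0.
Proof.
move=> row_sum0.
have A1 : A *m const_mx 1 = 0 :> 'cV_n.+1.
  apply/matrixP => i j; rewrite !mxE -[RHS](row_sum0 i).
  by apply: eq_bigr => k _; rewrite mxE mulr1.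
have /matrixP/(_ 0 0) : \adj A *m (A *m const_mx 1) = (\det A)%:M *m const_mx 1 :> 'cV_n.+1.
  by rewrite mulmxA mul_adj_mx.
by rewrite A1 mulmx0 mul_scalar_mx !mxE mulr1.
Qed.

Lemma incr_sel_inj i n (f : {ffun 'I_i -> 'I_n}) : incr_sel f -> injective f.
Proof.
move=> f_incr a b fab; apply/val_inj.
by case: (ltngtP a b) => [/f_incr|/f_incr|]; rewrite ?fab ?ltnn.
Qed.

Section DegreeEvaluation.

Variables (n : nat) (e : rel 'I_n).

Definition degree_vector (u : 'I_n) : int :=
  \sum_(w | w != u) (if e u w then 1 else 0).

Lemma meval_laplacian_row_sum u :
  \sum_v meval degree_vector (gen_laplacian e u v) = 0.
Proof.
rewrite (bigD1 u) //= mxE eqxx mevalXU /degree_vector -big_split /=.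
apply: big1 => w wu; rewrite mxE eq_sym (negbTE wu).
by case: (e u w); rewrite ?mevalN ?meval1 ?meval0 subrr.
Qed.

Lemma meval_minor i (M : 'M[{mpoly int[n]}]_n) (x : 'I_n -> int) f g :
  meval x (minor M f g) = \det (\matrix_(a < i, b < i) meval x (M (f a) (g b))).
Proof. by rewrite /minor -det_map_mx; congr (\det _); apply/matrixP => a b; rewrite !mxE. Qed.

End DegreeEvaluation.

Lemma meval_full_minor_laplacian n (e : rel 'I_n.+1) (f g : {ffun 'I_n.+1 -> 'I_n.+1}) :
  injective g -> meval (degree_vector e) (minor (gen_laplacian e) f g) = 0.
Proof.
move=> g_inj; rewrite meval_minor; apply: det_eq0_of_row_sums_eq0 => a.
under eq_bigr do rewrite mxE.
rewrite -(reindex_inj g_inj (P := xpredT)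
  (F := fun v => meval (degree_vector e) (gen_laplacian e (f a) v))).
exact: meval_laplacian_row_sum.
Qed.

Lemma top_critical_ideal_nontrivial n (e : rel 'I_n.+1) :
  ~ critical_ideal_trivial e n.+1.
Proof.
move=> [s [s_incr /(congr1 (meval (degree_vector e)))]].
rewrite meval1 rmorph_sum big_seq big1 => [/eqP|t /s_incr [_ /incr_sel_inj g_inj]].
  by rewrite eq_sym oner_eq0.
by rewrite rmorphM /= meval_full_minor_laplacian ?mulr0.
Qed.

Lemma critical_ideal_trivialbP n (e : rel 'I_n) i :
  reflect (critical_ideal_trivial e i) (critical_ideal_trivialb e i).
Proof. by rewrite /critical_ideal_trivialb; case: excluded_middle_informative; constructor. Qed.

Lemma gammaE n (e : rel 'I_n.+1) :
  gamma e = (\sum_(1 <= i < n.+1) critical_ideal_trivialb e i)%N.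
Proof.
rewrite /gamma big_nat_recr //=.
by case: critical_ideal_trivialbP => [/top_critical_ideal_nontrivial|]; rewrite ?addn0.
Qed.

Lemma gamma_lt_order n (e : rel 'I_n.+1) : (gamma e < n.+1)%N.
Proof.
rewrite gammaE ltnS (@leq_trans (\sum_(1 <= i < n.+1) 1)%N) //.
  by apply: leq_sum => i _; apply: leq_b1.
by rewrite sum_nat_const_nat muln1 subn1.
Qed.

Definition path_graph n : rel 'I_n.+1 :=
  fun u v => ((u : nat).+1 == v) || ((v : nat).+1 == u).
Arguments path_graph : clear implicits.

Lemma path_graph_simple n : simple_graph (path_graph n).
Proof.
split=> [u v|u]; first by rewrite /path_graph orbC.
by rewrite /path_graph; apply/norP; split; apply/eqP; lia.
Qed.

Lemma path_graph_connected n : connected_graph (path_graph n).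
Proof.
have path_sym : connect_sym (path_graph n).
  by apply: sym_connect_sym => u v; rewrite /path_graph orbC.
have from0 j : (j < n.+1)%N -> connect (path_graph n) ord0 (inord j).
  elim: j => [_|j IHj j_lt]; first by rewrite (_ : inord 0 = ord0) //; apply/val_inj/inordK.
  apply: connect_trans (IHj (ltnW j_lt)) (connect1 _).
  by rewrite /path_graph !inordK ?eqxx //; lia.
move=> u v; apply: (connect_trans (y := ord0)).
  by rewrite path_sym -(inord_val u) from0.
by rewrite -(inord_val v) from0.
Qed.

(* Rows 0..i-1 against columns 1..i: the entry (a, b) is -1 for b = a and
   zero for b > a, so the minor is triangular with determinant (-1)^i. *)
Lemma path_graph_critical_ideal_trivial n i :
  (i <= n)%N -> critical_ideal_trivial (path_graph n) i.
Proof.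
move=> i_le.
pose f : {ffun 'I_i -> 'I_n.+1} := [ffun a : 'I_i => inord a].
pose g : {ffun 'I_i -> 'I_n.+1} := [ffun a : 'I_i => inord a.+1].
have fE (a : 'I_i) : f a = a :> nat by rewrite ffunE inordK //; have := ltn_ord a; lia.
have gE (a : 'I_i) : g a = a.+1 :> nat by rewrite ffunE inordK //; have := ltn_ord a; lia.
have fg_neq (a b : 'I_i) : (a <= b)%N -> (f a == g b) = false.
  by move=> ab; apply/eqP => /(congr1 val); rewrite /= fE gE; lia.
exists [:: ((-1) ^+ i, f, g)]; split.
  by move=> t; rewrite inE => /eqP -> /=; split=> a b ab; rewrite ?fE ?gE.
rewrite big_seq1 /= /minor det_trig; last first.
  apply/is_trig_mxP => a b ab; rewrite !mxE fg_neq ?(ltnW ab) // /path_graph fE gE.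
  by rewrite ifF //; apply/norP; split; apply/eqP; lia.
rewrite (eq_bigr (fun _ => -1)) => [|a _]; last by rewrite !mxE fg_neq // /path_graph fE gE eqxx.
by rewrite prodr_const card_ord -exprMn mulrNN mulr1 expr1n.
Qed.

Lemma gamma_path_graph n : gamma (path_graph n) = n.
Proof.
rewrite gammaE (eq_big_nat _ _ (F2 := fun => 1%N)) => [|i /andP [_ i_lt]].
  by rewrite sum_nat_const_nat muln1 subn1.
by case: critical_ideal_trivialbP => // [[]]; apply: path_graph_critical_ideal_trivial.
Qed.

Theorem corollary5p4 :
  forall k : nat, exists (n : nat) (e : rel 'I_n.+1), in_Forb k e.
Proof.
move=> k; exists k.+1, (path_graph k.+1).
split; first exact: path_graph_simple.
split; first exact: path_graph_connected.
rewrite gamma_path_graph; split=> // v.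
exact: gamma_lt_order.
Qed.
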